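(* Let $(\mathcal W,\rhd)$ be a well-founded frame (over a fixed syntactical $\lambda$-algebra $(\mathcal V,\cdot,[\![-]\!])$). Then $\mathcal I[\bullet(A\to B)]^\eta_p=\mathcal I[\bullet A\to\bullet B]^\eta_p$ holds for all type expressions $A,B$, all hereditary type environments $\eta$ and all $p\in\mathcal W$ if and only if $\rhd$ is locally linear.
   Context: Type expressions: fix a countably infinite set of type variables $X,Y,Z,\dots$. Pseudo type expressions are generated by $A::=X\mid A\to A\mid \bullet A\mid \mu X.A$ ($\mu$ binds $X$; $\alpha$-convertible expressions are identified; $\to$ associates to the right; $\bullet$ binds tighter than $\to$, which binds tighter than $\mu$). $A[B/X]$ denotes capture-avoiding substitution. $\top$ abbreviates $\mu X.\bullet X$, and $\bullet^n A$ denotes $A$ prefixed by $n$ copies of $\bullet$. The tail $t(A)$ is defined by $t(X)=X$, $t(A\to B)=t(B)$, $t(\bullet A)=\bullet t(A)$, $t(\mu X.A)=\mu X.t(A)$; it always has the form $\bullet^{m_0}\mu X_1.\bullet^{m_1}\mu X_2.\cdots\mu X_n.\bullet^{m_n}Y$. $A$ is a $\top$-variant iff $Y=X_i$ for some $1\le i\le n$ with $X_i\notin\{X_{i+1},\dots,X_n\}$ and $m_i+\dots+m_n\ge 1$. $A$ is proper in $X$ iff: a variable $Y$ is proper in $X$ iff $Y\neq X$; $\bullet A$ is always proper in $X$; $A\to B$ is proper in $X$ iff both $A,B$ are proper in $X$ or $B$ is a $\top$-variant; for $Y\ne X$, $\mu Y.A$ is proper in $X$ iff $A$ is proper in $X$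 or $\mu Y.A$ is a $\top$-variant. Type expressions are the least set of pseudo type expressions containing all type variables, closed under $\to$ and $\bullet$, and containing $\mu X.A$ whenever it contains $A$ and $A$ is proper in $X$. Semantics: a syntactical $\lambda$-algebra $(\mathcal V,\cdot,[\![-]\!])$ consists of a nonempty set $\mathcal V$, a map $\cdot:\mathcal V\times\mathcal V\to\mathcal V$, and values $[\![M]\!]_\rho\in\mathcal V$ for untyped $\lambda$-terms $M$ and maps $\rho$ from individual variables to $\mathcal V$, such that $[\![x]\!]_\rho=\rho(x)$, $[\![MN]\!]_\rho=[\![M]\!]_\rho\cdot[\![N]\!]_\rho$, $[\![\lambda x.M]\!]_\rho\cdot v=[\![M]\!]_{\rho[v/x]}$, $[\![M]\!]_\rho$ depends only on $\rho$ restricted to free variables of $M$, and $M=_\beta N$ implies $[\![M]\!]_\rho=[\![N]\!]_\rho$. A well-founded frame is a pair $(\mathcal W,\rhd)$ with $\mathcal W$ nonempty and $\rhd$ a binary relation on $\mathcal W$ admitting no infinite chain $p_0\rhd p_1\rhd p_2\rhd\cdots$; $\trianglerighteq$ denotes the reflexive-transitive closure of $\rhd$. $\rhd$ is locally linear if whenever $p\rhd q$ there is $r$ with $p\trianglerighteq r\rhd q$ such that $r\rhd s$ implies $q\trianglerighteq s$ for all $s$. A $\lambda$A-frame is a well-founded frame whose $\rhd$ is locally linear. A type environment $\eta$ assigns a set $\eta(X)_p\subseteq\mathcal V$ to each type variable $X$ and world $p$; it is hereditary if $p\rhd q$ implies $\eta(X)_p\subseteq\eta(X)_q$. For hereditary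 $\eta$, $\mathcal I[A]^\eta_p\subseteq\mathcal V$ is defined (by well-founded induction on $p$ and the syntactic rank of $A$) by: $\mathcal I[A]^\eta_p=\mathcal V$ if $A$ is a $\top$-variant; otherwise $\mathcal I[X]^\eta_p=\eta(X)_p$; $\mathcal I[\bullet A]^\eta_p=\{u\mid u\in\mathcal I[A]^\eta_q\text{ for all }q\text{ with }p\rhd q\}$; $\mathcal I[A\to B]^\eta_p=\{u\mid \text{for all }q\text{ with }p\trianglerighteq q\text{ and all }v\in\mathcal I[A]^\eta_q,\ u\cdot v\in\mathcal I[B]^\eta_q\}$; $\mathcal I[\mu X.A]^\eta_p=\mathcal I[A[\mu X.A/X]]^\eta_p$. *)

From Stdlib Require Import Arith Lia Relations Classical ClassicalEpsilon.
From Stdlib Require Import Transitive_Closure.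

Inductive lterm : Type :=
| LVar (n : nat)
| LApp (M N : lterm)
| LLam (M : lterm).

Fixpoint llift (c : nat) (M : lterm) : lterm :=
  match M with
  | LVar n => if c <=? n then LVar (S n) else LVar n
  | LApp M N => LApp (llift c M) (llift c N)
  | LLam M => LLam (llift (S c) M)
  end.

Fixpoint lsubst (k : nat) (U : lterm) (M : lterm) : lterm :=
  match M with
  | LVar n => if n =? k then U else if k <? n then LVar (pred n) else LVar n
  | LApp M N => LApp (lsubst k U M) (lsubst k U N)
  | LLam M => LLam (lsubst (S k) (llift 0 U) M)
  end.

Inductive beta_eq : lterm -> lterm -> Prop :=
| beta_rule M N : beta_eq (LApp (LLam M) N) (lsubst 0 N M)
| beta_refl M : beta_eq M M
| beta_sym M N : beta_eq M N -> beta_eq N M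
| beta_trans M N P : beta_eq M N -> beta_eq N P -> beta_eq M P
| beta_app M M' N N' : beta_eq M M' -> beta_eq N N' -> beta_eq (LApp M N) (LApp M' N')
| beta_lam M M' : beta_eq M M' -> beta_eq (LLam M) (LLam M').

Fixpoint lfree (x : nat) (M : lterm) : Prop :=
  match M with
  | LVar n => x = n
  | LApp M N => lfree x M \/ lfree x N
  | LLam M => lfree (S x) M
  end.

Definition scons {V : Type} (v : V) (rho : nat -> V) : nat -> V :=
  fun n => match n with 0 => v | S n => rho n end.

Record syn_lambda_algebra (V : Type) (app : V -> V -> V)
    (sem : (nat -> V) -> lterm -> V) : Prop := {
  sla_nonempty : inhabited V;
  sla_var : forall rho n, sem rho (LVar n) = rho n;
  sla_app : forall rho M N, sem rho (LApp M N) = app (sem rho M) (sem rho N);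
  sla_lam : forall rho M v, app (sem rho (LLam M)) v = sem (scons v rho) M;
  sla_fv : forall rho rho' M, (forall x, lfree x M -> rho x = rho' x) ->
             sem rho M = sem rho' M;
  sla_beta : forall rho M N, beta_eq M N -> sem rho M = sem rho N
}.

(* R p q  stands for  p |> q *)
Definition no_infinite_chain {W : Type} (R : W -> W -> Prop) : Prop :=
  ~ exists f : nat -> W, forall n, R (f n) (f (S n)).

Definition rtc {W : Type} (R : W -> W -> Prop) : W -> W -> Prop :=
  clos_refl_trans W R.

Definition locally_linear {W : Type} (R : W -> W -> Prop) : Prop :=
  forall p q, R p q ->
    exists r, rtc R p r /\ R r q /\ (forall s, R r s -> rtc R q s).

(* below R q p  :  p |>+ q  (transitive closure) *)
Definition below {W : Type} (R : W -> W -> Prop) : W -> W -> Prop :=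
  clos_trans W (fun q p => R p q).

Lemma nochain_wf {W : Type} (R : W -> W -> Prop) :
  no_infinite_chain R -> well_founded (fun q p => R p q).
Proof.
  intros H p. apply NNPP; intro Hp.
  set (Rf := fun q p => R p q).
  assert (step : forall x : {x : W | ~ Acc Rf x},
             {y : W | ~ Acc Rf y /\ R (proj1_sig x) y}).
  { intros [x Hx]. apply constructive_indefinite_description.
    apply NNPP; intro C. apply Hx. constructor. intros y Hy.
    apply NNPP; intro Hy'. apply C. exists y. split; assumption. }
  set (g := fun x : {x : W | ~ Acc Rf x} =>
              exist (fun y => ~ Acc Rf y) (proj1_sig (step x))
                    (proj1 (proj2_sig (step x)))).
  apply H.
  exists (fun n => proj1_sig (Nat.iter n g (exist (fun y => ~ Acc Rf y) p Hp))).
  intro n. simpl. exact (proj2 (proj2_sig (step _))).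
Qed.

Lemma wf_below {W : Type} (R : W -> W -> Prop) :
  no_infinite_chain R -> well_founded (below R).
Proof. intro H. apply wf_clos_trans. apply nochain_wf. exact H. Qed.

(* Pseudo type expressions (de Bruijn indices, so alpha-equivalent     *)
(* expressions are identical).  TVar n, when free at top level, is the *)
(* n-th type variable.                                                *)

Inductive ty : Type :=
| TVar (n : nat)
| TArr (A B : ty)
| TLat (A : ty)
| TMu (A : ty).        (* mu X. A, X = index 0 in A *)

Fixpoint lift (c : nat) (A : ty) : ty :=
  match A with
  | TVar n => if c <=? n then TVar (S n) else TVar n
  | TArr A B => TArr (lift c A) (lift c B)
  | TLat A => TLat (lift c A)
  | TMu A => TMu (lift (S c) A)
  end.

Fixpoint subst (k : nat) (U : ty) (A : ty) : ty :=
  match A with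
  | TVar n => if n =? k then U else if k <? n then TVar (pred n) else TVar n
  | TArr A B => TArr (subst k U A) (subst k U B)
  | TLat A => TLat (subst k U A)
  | TMu A => TMu (subst (S k) (lift 0 U) A)
  end.

Definition unfold (A : ty) : ty := subst 0 (TMu A) A.

Fixpoint tail (A : ty) : ty :=
  match A with
  | TVar n => TVar n
  | TArr _ B => tail B
  | TLat A => TLat (tail A)
  | TMu A => TMu (tail A)
  end.

(* On a tail  bullet^{m0} mu X1. ... mu Xn. bullet^{mn} Y :
   d = number of mu's passed, g k = "some bullet occurs after the binder
   of index k".  Y is a Top-variant witness iff Y is bound by one of the
   mu's of the tail and some bullet lies between that binder and Y. *)
Fixpoint tv (A : ty) (d : nat) (g : nat -> bool) : bool :=
  match A with
  | TVar k => (k <? d) && g k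
  | TArr _ B => tv B d g
  | TLat A => tv A d (fun _ => true)
  | TMu A => tv A (S d) (fun k => match k with 0 => false | S k => g k end)
  end.

Definition top_variantb (A : ty) : bool := tv (tail A) 0 (fun _ => false).
Definition top_variant (A : ty) : Prop := top_variantb A = true.

Fixpoint proper (A : ty) (x : nat) : Prop :=
  match A with
  | TVar k => k <> x
  | TLat _ => True
  | TArr A B => (proper A x /\ proper B x) \/ top_variant B
  | TMu A0 => proper A0 (S x) \/ top_variant A
  end.

Inductive is_type : ty -> Prop :=
| ty_var n : is_type (TVar n)
| ty_arr A B : is_type A -> is_type B -> is_type (TArr A B)
| ty_lat A : is_type A -> is_type (TLat A)
| ty_mu A : is_type A -> proper A 0 -> is_type (TMu A).

Fixpoint rank (A : ty) : nat :=
  if top_variantb A then 0 else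
  match A with
  | TArr A B => S (Nat.max (rank A) (rank B))
  | TMu A => S (rank A)
  | _ => 0
  end.

(* eta x p = eta(X_x)_p, a subset of V *)
Definition hereditary {W V : Type} (R : W -> W -> Prop)
    (eta : nat -> W -> V -> Prop) : Prop :=
  forall x p q, R p q -> forall v, eta x p v -> eta x q v.

(* interp R Hwf app eta p A = I[A]^eta_p, defined by well-founded recursion
   on p (w.r.t. |>+) and, inside a world, on the rank of A (used as fuel).
   The clause for A -> B quantifies over q with p |>= q, split as q = p or
   p |>+ q. *)
Definition interp {W : Type} (R : W -> W -> Prop) (Hwf : no_infinite_chain R)
    {V : Type} (app : V -> V -> V) (eta : nat -> W -> V -> Prop) :
    W -> ty -> V -> Prop :=
  Fix (wf_below R Hwf) (fun _ => ty -> V -> Prop)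
    (fun p (rec : forall q, below R q p -> ty -> V -> Prop) =>
       let fix go (n : nat) (A : ty) {struct n} : V -> Prop :=
         match n with
         | 0 => fun _ => False
         | S n =>
           if top_variantb A then fun _ => True else
           match A with
           | TVar x => eta x p
           | TLat A => fun u => forall q (H : R p q),
                          rec q (t_step W (fun q p => R p q) q p H) A u
           | TArr A B => fun u =>
               (forall v, go n A v -> go n B (app u v)) /\
               (forall q (H : below R q p) v, rec q H A v -> rec q H B (app u v))
           | TMu A0 => go n (unfold A0)
           end
         end
       in fun A => go (S (rank A)) A).

From Stdlib Require Import Arith Relations Lia Classical FunctionalExtensionality.

(* In every well-founded frame ▶(A → B) ⊆ ▶A → ▶B, because any path p ⊵ q ▷ r
   can be reorganised as p ▷ s ⊵ r.  For the converse inclusion, take u in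
   ▶A → ▶B at p, a step p ▷ q and q ⊵ q' with v in A at q'.  Writing the path
   as p ⊵ s ▷ q', local linearity provides s ⊵ r ▷ q' such that q' ⊵ t
   for every r ▷ t; by heredity v is in ▶A at r, so u v is in ▶B
   at r and hence in B at q'.  If instead some p ▷ q has no such r, the
   hereditary environment X := {w | q ⊵ w}, Y := {w | not w ⊵ q} separates the
   two types at p: since ⊵ is antisymmetric in a well-founded frame, any
   element of V lies in ▶X → ▶Y at p, but none lies in X → Y at q.  So of the
   λ-algebra only the non-emptiness of V matters. *)

Lemma tv_ext A d g g' : (forall k, k < d -> g k = g' k) -> tv A d g = tv A d g'.
Proof.
  revert d g g'; induction A as [n| |A IHA|A IHA]; intros d g g' Hg; simpl; auto.
  - destruct (Nat.ltb_spec n d); simpl; auto.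
  - apply IHA; intros [|k] Hk; auto. apply Hg; lia.
Qed.

Lemma top_variantb_lat A : top_variantb (TLat A) = top_variantb A.
Proof. unfold top_variantb; simpl; apply tv_ext; lia. Qed.

Lemma tv_tail_lift A c d g : tv (tail (lift (c + d) A)) d g = tv (tail A) d g.
Proof.
  revert d g; induction A as [n| |A IHA|A IHA]; intros d g; simpl; auto.
  - destruct (Nat.leb_spec (c + d) n); simpl; auto.
    destruct (Nat.ltb_spec (S n) d), (Nat.ltb_spec n d); simpl; auto; lia.
  - rewrite <- Nat.add_succ_r. apply IHA.
Qed.

Lemma top_variantb_lift A c : top_variantb (lift c A) = top_variantb A.
Proof. unfold top_variantb. rewrite <- (Nat.add_0_r c). apply tv_tail_lift. Qed.

Lemma tv_tail_subst A k d g U : tv (tail A) d g = true ->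
  tv (tail (subst (k + d) U A)) d g = true.
Proof.
  revert d g U; induction A as [n| |A IHA|A IHA]; intros d g U H; simpl in *; auto.
  - destruct (Nat.ltb_spec n d); simpl in H; try discriminate.
    destruct (Nat.eqb_spec n (k + d)); [lia|].
    destruct (Nat.ltb_spec (k + d) n); [lia|]. simpl.
    destruct (Nat.ltb_spec n d); [exact H|lia].
  - rewrite <- Nat.add_succ_r. apply IHA, H.
Qed.

Lemma top_variantb_subst A k U :
  top_variantb A = true -> top_variantb (subst k U A) = true.
Proof. unfold top_variantb. rewrite <- (Nat.add_0_r k). apply tv_tail_subst. Qed.

Lemma proper_lift A c x : proper A x -> proper (lift c A) (if c <=? x then S x else x).
Proof.
  revert c x; induction A as [n|A1 IH1 A2 IH2|A _|A IHA]; intros c x H; simpl in *.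
  - destruct (Nat.leb_spec c n), (Nat.leb_spec c x); simpl; lia.
  - destruct H as [[H1 H2]|H]; [left; auto|right].
    exact (eq_trans (top_variantb_lift A2 c) H).
  - exact I.
  - destruct H as [H|H]; [left|right].
    + specialize (IHA (S c) (S x) H). simpl in IHA. destruct (c <=? x); exact IHA.
    + exact (eq_trans (top_variantb_lift (TMu A) c) H).
Qed.

Lemma proper_lift_fresh A c : proper (lift c A) c.
Proof.
  revert c; induction A as [n| | |]; intros c; simpl; auto.
  destruct (Nat.leb_spec c n); simpl; lia.
Qed.

Lemma proper_subst A k U x : x <> k -> proper A x ->
  proper U (if k <? x then pred x else x) ->
  proper (subst k U A) (if k <? x then pred x else x).
Proof.
  revert k U x; induction A as [n|A1 IH1 A2 IH2|A _|A IHA]; intros k U x Hxk H HU;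
    simpl in *.
  - destruct (Nat.eqb_spec n k); auto.
    destruct (Nat.ltb_spec k n), (Nat.ltb_spec k x); simpl; lia.
  - destruct H as [[H1 H2]|H]; [left; auto|right].
    apply top_variantb_subst, H.
  - exact I.
  - destruct H as [H|H]; [left|right].
    + assert (E : S (if k <? x then pred x else x)
                  = if S k <? S x then pred (S x) else S x)
        by (destruct (Nat.ltb_spec k x), (Nat.ltb_spec (S k) (S x)); lia).
      rewrite E. apply IHA; [lia|exact H|].
      rewrite <- E. exact (proper_lift U 0 _ HU).
    + exact (top_variantb_subst (TMu A) k U H).
Qed.

Lemma is_type_lift A c : is_type A -> is_type (lift c A).
Proof.
  intros HA; revert c; induction HA as [n| | |A HA IHA HAp]; intros c; simpl.
  - destruct (c <=? n); constructor.
  - constructor; auto.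
  - constructor; auto.
  - constructor; auto. exact (proper_lift A (S c) 0 HAp).
Qed.

Lemma is_type_subst A k U : is_type A -> is_type U -> is_type (subst k U A).
Proof.
  intros HA; revert k U; induction HA as [n| | |A HA IHA HAp]; intros k U HU; simpl.
  - destruct (n =? k); auto. destruct (k <? n); constructor.
  - constructor; auto.
  - constructor; auto.
  - constructor.
    + apply IHA, is_type_lift, HU.
    + exact (proper_subst A (S k) (lift 0 U) 0 ltac:(lia) HAp (proper_lift_fresh U 0)).
Qed.

Lemma is_type_unfold A : is_type (TMu A) -> is_type (unfold A).
Proof. intros HA; inversion HA; apply is_type_subst; assumption. Qed.

Lemma rank_top A : top_variantb A = true -> rank A = 0.
Proof. intros H; destruct A; cbn [rank]; rewrite H; reflexivity. Qed.

Lemma rank_arr A B : top_variantb (TArr A B) = false ->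
  rank (TArr A B) = S (Nat.max (rank A) (rank B)).
Proof. intros H; cbn [rank]; rewrite H; reflexivity. Qed.

Lemma rank_mu A : top_variantb (TMu A) = false -> rank (TMu A) = S (rank A).
Proof. intros H; cbn [rank]; rewrite H; reflexivity. Qed.

Lemma rank_subst A x U : proper A x -> rank (subst x U A) <= rank A.
Proof.
  revert x U; induction A as [n|A1 IH1 A2 IH2|A _|A IHA]; intros x U H.
  - simpl subst. destruct (Nat.eqb_spec n x); [simpl in H; lia|].
    destruct (x <? n); cbn [rank]; repeat destruct (top_variantb _); lia.
  - change (rank (TArr (subst x U A1) (subst x U A2)) <= rank (TArr A1 A2)).
    destruct (top_variantb (TArr A1 A2)) eqn:E2.
    { rewrite rank_top; [lia|exact (top_variantb_subst (TArr A1 A2) x U E2)]. }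
    destruct H as [[H1 H2]|H]; [|change (top_variantb A2 = false) in E2; congruence].
    destruct (top_variantb (TArr (subst x U A1) (subst x U A2))) eqn:E1;
      [rewrite rank_top; [lia|exact E1]|].
    rewrite (rank_arr _ _ E1), (rank_arr _ _ E2).
    specialize (IH1 x U H1); specialize (IH2 x U H2); lia.
  - cbn [subst rank]; repeat destruct (top_variantb _); lia.
  - change (rank (TMu (subst (S x) (lift 0 U) A)) <= rank (TMu A)).
    destruct (top_variantb (TMu A)) eqn:E2.
    { rewrite rank_top; [lia|exact (top_variantb_subst (TMu A) x U E2)]. }
    destruct H as [H|H]; [|congruence].
    destruct (top_variantb (TMu (subst (S x) (lift 0 U) A))) eqn:E1;
      [rewrite rank_top; [lia|exact E1]|].
    rewrite (rank_mu _ E1), (rank_mu _ E2).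
    specialize (IHA (S x) (lift 0 U) H); lia.
Qed.

Lemma rank_unfold_lt A : is_type (TMu A) -> top_variantb (TMu A) = false ->
  rank (unfold A) < rank (TMu A).
Proof.
  intros HA Htv; inversion HA; subst. rewrite (rank_mu _ Htv).
  pose proof (rank_subst A 0 (TMu A) H1); unfold unfold; lia.
Qed.

Section Frames.
Variables (W : Type) (R : W -> W -> Prop).

Lemma below_iff q p : below R q p <-> clos_trans W R p q.
Proof. symmetry; exact (clos_trans_transp_permute W R q p). Qed.

Lemma rtc_of_below q p : below R q p -> rtc R p q.
Proof. intros H; apply clos_t_clos_rt, below_iff, H. Qed.

Lemma rtc_eq_or_below p q : rtc R p q -> p = q \/ below R q p.
Proof.
  intros H; apply clos_rt_rtn1 in H; destruct H as [|r q' Hrq Hpr]; [now left|right].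
  apply below_iff, (clos_rt_t _ _ p r q' (clos_rtn1_rt _ _ _ _ Hpr)), t_step, Hrq.
Qed.

Lemma rtc_first_step p q r : rtc R p q -> R q r -> exists s, R p s /\ rtc R s r.
Proof.
  intros Hpq Hqr; apply clos_rt_rt1n in Hpq.
  destruct Hpq as [|s q' Hps Hsq]; [exists r; split; [exact Hqr|apply rt_refl]|].
  exists s; split; [exact Hps|].
  apply (rt_trans _ _ s q' r); [apply clos_rt1n_rt, Hsq|apply rt_step, Hqr].
Qed.

Lemma rtc_last_step p q r : R p q -> rtc R q r -> exists s, rtc R p s /\ R s r.
Proof.
  intros Hpq Hqr; apply clos_rt_rtn1 in Hqr.
  destruct Hqr as [|s r' Hsr Hqs]; [exists p; split; [apply rt_refl|exact Hpq]|].
  exists s; split; [|exact Hsr].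
  apply (rt_trans _ _ p q s); [apply rt_step, Hpq|apply clos_rtn1_rt, Hqs].
Qed.

Hypothesis Hwf : no_infinite_chain R.

Lemma below_irrefl p : ~ below R p p.
Proof.
  induction p as [p IH] using (well_founded_ind (wf_below R Hwf)).
  intros H; exact (IH p H H).
Qed.

Lemma rtc_antisym p q : rtc R p q -> rtc R q p -> p = q.
Proof.
  intros Hpq Hqp.
  destruct (rtc_eq_or_below p q Hpq) as [|H1]; [assumption|].
  destruct (rtc_eq_or_below q p Hqp) as [|H2]; [now symmetry|].
  destruct (below_irrefl p (t_trans _ _ _ _ _ H2 H1)).
Qed.

End Frames.

Section Semantics.
Variables (W : Type) (R : W -> W -> Prop) (Hwf : no_infinite_chain R).
Variables (V : Type) (app : V -> V -> V) (eta : nat -> W -> V -> Prop).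

Local Notation Int := (interp R Hwf app eta).

Definition interp_body (I : W -> ty -> V -> Prop) (p : W) : nat -> ty -> V -> Prop :=
  fix go (n : nat) (A : ty) {struct n} : V -> Prop :=
    match n with
    | 0 => fun _ => False
    | S n =>
      if top_variantb A then fun _ => True else
      match A with
      | TVar x => eta x p
      | TLat A => fun u => forall q, R p q -> I q A u
      | TArr A B => fun u =>
          (forall v, go n A v -> go n B (app u v)) /\
          (forall q, below R q p -> forall v, I q A v -> I q B (app u v))
      | TMu A => go n (unfold A)
      end
    end.

Lemma interp_body_S I p n A : interp_body I p (S n) A =
  if top_variantb A then fun _ => True else
  match A with
  | TVar x => eta x p
  | TLat A => fun u => forall q, R p q -> I q A u
  | TArr A B => fun u =>
      (forall v, interp_body I p n A v -> interp_body I p n B (app u v)) /\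
      (forall q, below R q p -> forall v, I q A v -> I q B (app u v))
  | TMu A => interp_body I p n (unfold A)
  end.
Proof. reflexivity. Qed.

Lemma interp_fix p A : Int p A = interp_body Int p (S (rank A)) A.
Proof.
  unfold interp at 1; rewrite Fix_eq; [reflexivity|].
  intros x f g Hfg.
  replace f with g; [reflexivity|].
  apply functional_extensionality_dep; intro y.
  apply functional_extensionality_dep; intro h. symmetry; apply Hfg.
Qed.

Lemma interp_body_fuel p n m A : is_type A -> rank A < n -> rank A < m ->
  forall v, interp_body Int p n A v <-> interp_body Int p m A v.
Proof.
  revert m A; induction n as [|n IHn]; intros m A HA Hn Hm v; [lia|].
  destruct m as [|m]; [lia|]. rewrite !interp_body_S.
  destruct (top_variantb A) eqn:E; [tauto|].
  destruct A as [x|A B|A|A]; try tauto.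
  - inversion HA; subst. rewrite (rank_arr _ _ E) in Hn, Hm.
    split; intros [K1 K2]; split; auto; intros w Hw;
      (apply (IHn m); [assumption|lia|lia|]); apply K1;
      (apply (IHn m); [assumption|lia|lia|]); exact Hw.
  - pose proof (rank_unfold_lt A HA E).
    apply IHn; [apply is_type_unfold, HA|lia|lia].
Qed.

Lemma interp_body_interp p n A : is_type A -> rank A < n ->
  forall v, Int p A v <-> interp_body Int p n A v.
Proof. intros HA Hn v; rewrite interp_fix; apply interp_body_fuel; auto. Qed.

Lemma interp_top p A v : top_variantb A = true -> Int p A v.
Proof. intros H; rewrite interp_fix, interp_body_S, H; exact I. Qed.

Lemma interp_var p x v : Int p (TVar x) v <-> eta x p v.
Proof. rewrite interp_fix; reflexivity. Qed.

Lemma interp_lat p A u : Int p (TLat A) u <-> forall q, R p q -> Int q A u.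
Proof.
  destruct (top_variantb A) eqn:E.
  - split; intros; apply interp_top; rewrite ?top_variantb_lat; exact E.
  - rewrite interp_fix, interp_body_S, top_variantb_lat, E; reflexivity.
Qed.

Lemma interp_arr p A B u : is_type A -> is_type B ->
  Int p (TArr A B) u <->
  forall q, rtc R p q -> forall v, Int q A v -> Int q B (app u v).
Proof.
  intros HA HB. destruct (top_variantb (TArr A B)) eqn:E.
  { split; intros; apply interp_top; exact E. }
  rewrite interp_fix, interp_body_S, E, (rank_arr _ _ E).
  assert (HAr : rank A < S (Nat.max (rank A) (rank B))) by lia.
  assert (HBr : rank B < S (Nat.max (rank A) (rank B))) by lia.
  split.
  - intros [Know Klater] q Hpq v Hv.
    destruct (rtc_eq_or_below W R p q Hpq) as [<-|Hb]; [|now apply Klater].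
    apply (interp_body_interp p _ B HB HBr), Know, (interp_body_interp p _ A HA HAr), Hv.
  - intros K; split.
    + intros v Hv; apply (interp_body_interp p _ B HB HBr), K;
        [apply rt_refl|apply (interp_body_interp p _ A HA HAr), Hv].
    + intros q Hb v Hv; apply K; [apply rtc_of_below, Hb|exact Hv].
Qed.

Lemma interp_mu p A v : is_type (TMu A) -> top_variantb (TMu A) = false ->
  Int p (TMu A) v <-> Int p (unfold A) v.
Proof.
  intros HA E. pose proof (rank_unfold_lt A HA E) as Hrank.
  rewrite (rank_mu _ E) in Hrank.
  rewrite interp_fix, interp_body_S, E, (rank_mu _ E).
  symmetry; apply interp_body_interp; [apply is_type_unfold, HA|exact Hrank].
Qed.

Hypothesis Heta : hereditary R eta.

Lemma interp_hereditary p q A v : is_type A -> R p q -> Int p A v -> Int q A v.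
Proof.
  revert q A v; induction p as [p IHp] using (well_founded_ind (wf_below R Hwf)).
  intros q A; revert A q.
  induction A as [A IHA] using (well_founded_ind (Wf_nat.well_founded_ltof _ rank)).
  intros q v HA Hpq.
  destruct (top_variantb A) eqn:E; [intros; apply interp_top, E|].
  destruct A as [x|A B|A|A].
  - rewrite !interp_var; apply Heta, Hpq.
  - inversion HA; subst. rewrite !interp_arr by assumption.
    intros K q' Hqq' w Hw; apply K; [|exact Hw].
    apply (rt_trans _ _ p q q'); [apply rt_step, Hpq|exact Hqq'].
  - inversion HA as [| |? HA'|]; subst. rewrite !interp_lat. intros K r Hqr.
    apply (IHp q (proj2 (below_iff W R q p) (t_step _ _ _ _ Hpq)) r A v HA' Hqr), K, Hpq.
  - rewrite !interp_mu by assumption.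
    apply IHA; [apply (rank_unfold_lt A HA E)|apply is_type_unfold, HA|exact Hpq].
Qed.

Lemma interp_hereditary_rtc p q A v : is_type A -> rtc R p q -> Int p A v -> Int q A v.
Proof.
  intros HA Hpq; induction Hpq as [p q Hpq| |]; auto.
  now apply interp_hereditary.
Qed.

End Semantics.

Section LaterArrow.
Variables (W : Type) (R : W -> W -> Prop) (Hwf : no_infinite_chain R).
Variables (V : Type) (app : V -> V -> V).

Local Notation Int eta := (interp R Hwf app eta).

Lemma interp_lat_arr_sub eta A B p u : is_type A -> is_type B ->
  Int eta p (TLat (TArr A B)) u -> Int eta p (TArr (TLat A) (TLat B)) u.
Proof.
  intros HA HB. rewrite interp_lat, interp_arr by (constructor; assumption).
  intros K q Hpq v. rewrite !interp_lat. intros Hv r Hqr.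
  destruct (rtc_first_step W R p q r Hpq Hqr) as [s [Hps Hsr]].
  specialize (K s Hps); rewrite interp_arr in K by assumption.
  apply K, Hv, Hqr; exact Hsr.
Qed.

Lemma interp_lat_arr_sup eta A B p u :
  locally_linear R -> hereditary R eta -> is_type A -> is_type B ->
  Int eta p (TArr (TLat A) (TLat B)) u -> Int eta p (TLat (TArr A B)) u.
Proof.
  intros LL Heta HA HB. rewrite interp_lat, interp_arr by (constructor; assumption).
  intros K q Hpq. rewrite interp_arr by assumption. intros q' Hqq' v Hv.
  destruct (rtc_last_step W R p q q' Hpq Hqq') as [s [Hps Hsq']].
  destruct (LL s q' Hsq') as [r [Hsr [Hrq' Hr]]].
  assert (Hv' : Int eta r (TLat A) v).
  { apply interp_lat; intros t Hrt.
    exact (interp_hereditary_rtc W R Hwf V app eta Heta q' t A v HA (Hr t Hrt) Hv). }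
  specialize (K r (rt_trans _ _ p s r Hps Hsr) v Hv').
  rewrite interp_lat in K; exact (K q' Hrq').
Qed.

Lemma locally_linear_of_interp_lat_arr (v0 : V) :
  (forall eta, hereditary R eta -> forall p u,
     Int eta p (TArr (TLat (TVar 0)) (TLat (TVar 1))) u ->
     Int eta p (TLat (TArr (TVar 0) (TVar 1))) u) ->
  locally_linear R.
Proof.
  intros Hsup p q Hpq. apply NNPP; intro Hnot.
  set (eta := fun (x : nat) (w : W) (_ : V) =>
                match x with 0 => rtc R q w | _ => ~ rtc R w q end).
  assert (Heta : hereditary R eta).
  { intros [|x] w w' Hww' v; simpl.
    - intros Hqw; exact (rt_trans _ _ _ _ _ Hqw (rt_step _ _ _ _ Hww')).
    - intros Hw Hw'q; exact (Hw (rt_trans _ _ _ _ _ (rt_step _ _ _ _ Hww') Hw'q)). }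
  assert (Hu : Int eta p (TArr (TLat (TVar 0)) (TLat (TVar 1))) v0).
  { apply interp_arr; [repeat constructor|repeat constructor|].
    intros r Hpr v. rewrite !interp_lat. intros Hv s Hrs. apply interp_var; intros Hsq.
    assert (Hr : forall s', R r s' -> rtc R q s')
      by (intros s' Hrs'; exact (proj1 (interp_var _ _ _ _ _ _ _ _ _) (Hv s' Hrs'))).
    assert (s = q) as -> by exact (rtc_antisym W R Hwf s q Hsq (Hr s Hrs)).
    exact (Hnot (ex_intro _ r (conj Hpr (conj Hrs Hr)))). }
  specialize (Hsup eta Heta p v0 Hu).
  rewrite interp_lat in Hsup; specialize (Hsup q Hpq).
  rewrite interp_arr in Hsup by constructor.
  specialize (Hsup q (rt_refl _ _ q) v0).
  rewrite !interp_var in Hsup; exact (Hsup (rt_refl _ _ q) (rt_refl _ _ q)).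
Qed.

End LaterArrow.

Theorem theorem3 (V : Type) (app : V -> V -> V) (sem : (nat -> V) -> lterm -> V)
  (HV : syn_lambda_algebra V app sem)
  (W : Type) (R : W -> W -> Prop) (HW : inhabited W) (Hwf : no_infinite_chain R) :
  (forall A B : ty, is_type A -> is_type B ->
   forall eta : nat -> W -> V -> Prop, hereditary R eta ->
   forall (p : W) (u : V),
     interp R Hwf app eta p (TLat (TArr A B)) u <->
     interp R Hwf app eta p (TArr (TLat A) (TLat B)) u)
  <-> locally_linear R.
Proof.
  split.
  - intros Hdistr. destruct (sla_nonempty _ _ _ HV) as [v0].
    apply (locally_linear_of_interp_lat_arr W R Hwf V app v0).
    intros eta Heta p u; apply Hdistr; [constructor|constructor|exact Heta].
  - intros LL A B HA HB eta Heta p u; split.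
    + apply interp_lat_arr_sub; assumption.
    + apply interp_lat_arr_sup; assumption.
Qed.
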